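(* Let $u \in \mathbb{R}^n_{\ge 0}$ and let $h : \mathbb{R}^n \to \mathbb{R}$ be a differentiable concave function with $h(0) > 0$. Let $Y = \{y \in [0,u] : h(y) = 0\}$ (for every $y \in Y$ one has $\nabla h(y)^{\mathsf T} y < 0$). Let $\beta : Y \to \mathbb{R}$ be such that $\beta(y) < 1$ for all $y \in Y$ and such that every $x \ge 0$ satisfying the disjunction \[ \bigvee_{y \in Y} \frac{\nabla h(y)^{\mathsf T} x}{\nabla h(y)^{\mathsf T} y} \ge 1 \qquad (\ast) \] (i.e., there exists $y \in Y$ with $\frac{\nabla h(y)^{\mathsf T} x}{\nabla h(y)^{\mathsf T} y} \ge 1$) also satisfies $\frac{\nabla h(y)^{\mathsf T} x}{\nabla h(y)^{\mathsf T} y} \ge \beta(y)$ for every $y \in Y$. Let $z : Y \to \mathbb{Z}$ be such that either $z \equiv 0$ or there exists $y_0 \in Y$ with $z(y_0) > 0$. Then every $x \ge 0$ satisfying $(\ast)$ also satisfies \[ \bigvee_{y \in Y} \frac{\nabla h(y)^{\mathsf T} x}{\nabla h(y)^{\mathsf T} y} + z(y)\,(1 - \beta(y)) \ge 1, \] i.e., there exists $y \in Y$ with $\frac{\nabla h(y)^{\mathsf T} x}{\nabla h(y)^{\mathsf T} y} + z(y)(1 - \beta(y)) \ge 1$.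
   Context: $[0,u] = \{x \in \mathbb{R}^n : 0 \le x_i \le u_i \text{ for all } i\}$. The function $\beta$ plays the role of lower bounds on each disjunctive term valid for all relevant points. *)

From HB Require Import structures.
From mathcomp Require Import all_boot all_order all_algebra.
From mathcomp Require Import all_classical all_reals all_analysis.
Set Implicit Arguments. Unset Strict Implicit. Unset Printing Implicit Defensive.
Import Order.TTheory GRing.Theory Num.Theory.
Import numFieldNormedType.Exports.
Local Open Scope ring_scope.

Definition concave_fun (R : realType) (n : nat) (h : 'rV[R]_n -> R) : Prop :=
  forall (x y : 'rV[R]_n) (t : R), 0 <= t -> t <= 1 ->
    t * h x + (1 - t) * h y <= h (t *: x + (1 - t) *: y).

Definition grad (R : realType) (n : nat) (h : 'rV[R]_n -> R) (y : 'rV[R]_n)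
  : 'rV[R]_n := \row_i ('D_(delta_mx 0 i) h y).

Definition dotv (R : realType) (n : nat) (a b : 'rV[R]_n) : R :=
  \sum_(i < n) a 0 i * b 0 i.

Definition grad_ratio (R : realType) (n : nat) (h : 'rV[R]_n -> R) (y x : 'rV[R]_n) : R :=
  dotv (grad h y) x / dotv (grad h y) y.

Definition nonneg_vec (R : realType) (n : nat) (x : 'rV[R]_n) : Prop :=
  forall i, 0 <= x 0 i.

Definition inY (R : realType) (n : nat) (u : 'rV[R]_n) (h : 'rV[R]_n -> R)
  (y : 'rV[R]_n) : Prop :=
  (forall i, 0 <= y 0 i /\ y 0 i <= u 0 i) /\ h y = 0.

From HB Require Import structures.
From mathcomp Require Import all_boot all_order all_algebra.
From mathcomp Require Import all_classical all_reals all_analysis.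
From mathcomp Require Import lra.
Import Order.TTheory GRing.Theory Num.Theory.
Import numFieldNormedType.Exports.
Local Open Scope ring_scope.

(* If z vanishes on Y, the original satisfied term of the disjunction still
   works.  Otherwise pick y0 with z(y0) >= 1: the validity of beta gives
   ratio(y0, x) >= beta(y0), and adding z(y0)(1 - beta(y0)) >= 1 - beta(y0)
   reaches 1.  Nothing about h, u or the geometry of Y is needed. *)

Lemma ge1_addr_mulz_subr (R : realDomainType) (r b : R) (k : int) :
  b <= r -> b < 1 -> (0 < k)%R -> 1 <= r + k%:~R * (1 - b).
Proof.
move=> le_br lt_b1 k_gt0.
have k_ge1 : 1 <= k%:~R :> R by rewrite ler1z -gtz0_ge1.
have gap_ge0 : 0 <= 1 - b by rewrite subr_ge0 ltW.
have : 1 * (1 - b) <= k%:~R * (1 - b) by rewrite ler_wpM2r.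
lra.
Qed.

Lemma disjunction_strengthen (R : realDomainType) (T : Type) (Y : T -> Prop)
    (r b : T -> R) (z : T -> int) :
  (forall y, Y y -> b y < 1) ->
  (forall y, Y y -> b y <= r y) ->
  (forall y, Y y -> z y = 0) \/ (exists y0, Y y0 /\ (0 < z y0)%R) ->
  (exists y, Y y /\ 1 <= r y) ->
  exists y, Y y /\ 1 <= r y + (z y)%:~R * (1 - b y).
Proof.
move=> b_lt1 b_le_r [z0 | [y0 [Yy0 z_gt0]]] [y [Yy r_ge1]].
  by exists y; rewrite z0 // mul0r addr0.
by exists y0; split => //; apply: ge1_addr_mulz_subr; auto.
Qed.

Theorem lemma1 (R : realType) (n : nat) (u : 'rV[R]_n) (h : 'rV[R]_n -> R)
  (beta : 'rV[R]_n -> R) (z : 'rV[R]_n -> int) :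
  nonneg_vec u ->
  (forall x, differentiable h x) ->
  concave_fun h ->
  0 < h 0 ->
  (forall y, inY u h y -> beta y < 1) ->
  (forall x, nonneg_vec x ->
     (exists y, inY u h y /\ 1 <= grad_ratio h y x) ->
     forall y, inY u h y -> beta y <= grad_ratio h y x) ->
  ((forall y, inY u h y -> z y = 0) \/ (exists y0, inY u h y0 /\ (0 < z y0)%R)) ->
  forall x, nonneg_vec x ->
    (exists y, inY u h y /\ 1 <= grad_ratio h y x) ->
    exists y, inY u h y /\ 1 <= grad_ratio h y x + (z y)%:~R * (1 - beta y).
Proof.
move=> _ _ _ _ beta_lt1 beta_valid z_cases x x_ge0 x_sat.
apply: disjunction_strengthen => //.
exact: beta_valid x_ge0 x_sat.
Qed.
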